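(* There is a universal constant $\kappa>0$ such that for all sufficiently large $T$ the following holds. For every deterministic online algorithm that, in a market with one seller and two buyers, posts in each round a single price to all three traders, there exist a seller cost $c_1=0$ and buyer values $v_1,v_2\in[0,1]$ such that the cumulative gains-from-trade regret of the algorithm over $T$ rounds is at least $\kappa\cdot\frac{\log\log T}{\log\log\log\log T}$.
   Context: Two-sided market model: sellers have fixed unknown costs $c_i\in[0,1]$, buyers fixed unknown values $v_j\in[0,1]$. In each round the learner posts prices and observes every trader's accept/reject decision; a seller accepts a price $p$ iff $p\ge c_i$, a buyer accepts a price $q$ iff $q\le v_j$ (ties in favour of accepting). A maximum-cardinality matching between accepting sellers and accepting buyers is formed; the gains-from-trade (GFT) of a matching $M$ is $\sum_{(i,j)\in M}(v_j-c_i)$. Benchmark: $\mathrm{GFT}^\star$, the maximum GFT over all matchings between sellers and buyers. Round-$t$ regret is $\mathrm{GFT}^\star$ minus the minimum GFT over all maximum-cardinality matchings of the traders accepting in round $t$ (worst-case matching rule); the cumulative regret is the sum over $t=1,\dots,T$. A single-price mechanism posts one common price to all traders. *)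

From HB Require Import structures.
From mathcomp Require Import all_boot all_order all_algebra.
From mathcomp Require Import reals exp.
Set Implicit Arguments. Unset Strict Implicit. Unset Printing Implicit Defensive.
Import Order.TTheory GRing.Theory Num.Theory.
Local Open Scope ring_scope.

Section Market.
Variables (R : realType) (n m : nat).
Variables (c : 'I_n -> R) (v : 'I_m -> R).

Definition edge := ('I_n * 'I_m)%type.

Definition is_matching (M : {set edge}) : bool :=
  [forall x in M, forall y in M, ((x.1 == y.1) || (x.2 == y.2)) ==> (x == y)].

Definition gft (M : {set edge}) : R := \sum_(e in M) (v e.2 - c e.1).

(* benchmark: max GFT over all matchings (the empty matching has GFT 0) *)
Definition gft_star : R :=
  \big[Num.max/0]_(M : {set edge} | is_matching M) gft M.

Definition seller_accepts (p : R) (i : 'I_n) : bool := c i <= p.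
Definition buyer_accepts (q : R) (j : 'I_m) : bool := q <= v j.

Definition accepting_matching (p q : R) (M : {set edge}) : bool :=
  is_matching M &&
  [forall e in M, seller_accepts p e.1 && buyer_accepts q e.2].

Definition max_card (p q : R) : nat :=
  \max_(M : {set edge} | accepting_matching p q M) #|M|.

Definition max_card_matching (p q : R) (M : {set edge}) : bool :=
  accepting_matching p q M && (#|M| == max_card p q).

(* round regret with worst-case matching rule:
   GFT* - min_{max-card matchings M} GFT(M)
   = max_{max-card matchings M} (GFT* - GFT(M)) *)
Definition round_regret (p q : R) : R :=
  \big[Num.max/0]_(M : {set edge} | max_card_matching p q M) (gft_star - gft M).

Definition feedback := ({ffun 'I_n -> bool} * {ffun 'I_m -> bool})%type.

Definition observe (p q : R) : feedback :=
  ([ffun i => seller_accepts p i], [ffun j => buyer_accepts q j]).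

(* deterministic single-price algorithm: maps the history of feedback
   to the next (common) price *)
Variable alg : seq feedback -> R.

Fixpoint history (t : nat) : seq feedback :=
  match t with
  | 0 => [::]
  | t'.+1 => let h := history t' in rcons h (observe (alg h) (alg h))
  end.

Definition price (t : nat) : R := alg (history t).

Definition cum_regret (T : nat) : R :=
  \sum_(t < T) round_regret (price t) (price t).

End Market.

(* The adversary keeps an interval [lo, hi] inside [1/4, 1/2] and answers every
   price p as if the buyers' values were v1 = lo and v2 = (lo + hi) / 2: if
   p <= lo + (hi - lo)^3 both buyers accept and lo := max lo p, otherwise both
   reject and hi := min hi p.  These answers stay consistent with the final
   interval, and under the worst-case matching rule an accepted price costs
   v2 - v1 = w / 2 (w the final width) while a rejected one costs v2 >= 1/4.
   A low price shrinks w only by the factor 1 - w^2 and a high one at worst to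
   w^3, so the potential w^2 (potA k + 3 n) >= 1 forces the adversary to reach,
   within T = exp (exp (O K)) rounds, either K rejections or n w >= K / 2; the
   regret is then at least K / 4.  With K of order log log T this is even an
   Omega(log log T) bound. *)

From HB Require Import structures.
From mathcomp Require Import all_boot all_order all_algebra.
From mathcomp Require Import reals exp sequences ring lra zify.
Import Order.TTheory GRing.Theory Num.Theory.
Local Open Scope ring_scope.
Set Implicit Arguments. Unset Strict Implicit. Unset Printing Implicit Defensive.

Section Matchings.
Variables (R : realType) (n m : nat) (c : 'I_n -> R) (v : 'I_m -> R).

Lemma is_matching_set0 : is_matching (set0 : {set edge n m}).
Proof. by apply/forallP => x; rewrite inE. Qed.

Lemma is_matching_set1 (e : edge n m) : is_matching [set e].
Proof.
apply/forall_inP => x /set1P -> ; apply/forall_inP => y /set1P ->.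
exact/implyP.
Qed.

Lemma le_gft_star i j : v j - c i <= gft_star c v.
Proof.
have := le_bigmax_cond 0 (gft c v) (is_matching_set1 (i, j)).
by rewrite /gft big_set1.
Qed.

Lemma max_card_matchingP p q (M : {set edge n m}) :
  accepting_matching c v p q M ->
  (forall M', accepting_matching c v p q M' -> (#|M'| <= #|M|)%N) ->
  max_card_matching c v p q M.
Proof.
move=> accM maxM; rewrite /max_card_matching accM eqn_leq.
by rewrite (leq_bigmax_cond _ accM); apply/bigmax_leqP.
Qed.

Lemma round_regret_ge0 p q : 0 <= round_regret c v p q.
Proof. exact: bigmax_ge_id. Qed.

Lemma le_round_regret p q M : max_card_matching c v p q M ->
  gft_star c v - gft c v M <= round_regret c v p q.
Proof. exact: le_bigmax_cond. Qed.

End Matchings.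

Lemma card_matching_one_seller m (M : {set edge 1 m}) :
  is_matching M -> (#|M| <= 1)%N.
Proof.
move=> /forall_inP matchM; apply/card_le1_eqP => x y xM yM.
have /forall_inP/(_ x xM) := matchM y yM.
by rewrite [y.1]ord1 [x.1]ord1 eqxx => /implyP/(_ isT)/eqP.
Qed.

Lemma cum_regret_homo (R : realType) n m (c : 'I_n -> R) (v : 'I_m -> R) alg s T :
  (s <= T)%N -> cum_regret c v alg s <= cum_regret c v alg T.
Proof.
move=> /subnK <-; elim: (T - s)%N => // d IHd; apply: le_trans IHd _.
by rewrite addSn /cum_regret big_ord_recr /= lerDl round_regret_ge0.
Qed.

Section OneSellerTwoBuyers.
Variables (R : realType) (v : 'I_2 -> R).
Let c0 : 'I_1 -> R := fun _ => 0.

Lemma le_gft_star_value j : v j <= gft_star c0 v.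
Proof. by have := le_gft_star c0 v ord0 j; rewrite subr0. Qed.

Lemma round_regret_low_price p :
  0 <= p -> p <= v ord0 -> v ord_max - v ord0 <= round_regret c0 v p p.
Proof.
move=> p_ge0 p_le_v0.
have accM : accepting_matching c0 v p p [set (ord0, ord0)].
  rewrite /accepting_matching is_matching_set1; apply/forall_inP => e /set1P -> /=.
  by rewrite /seller_accepts /buyer_accepts p_ge0 p_le_v0.
have maxM : max_card_matching c0 v p p [set (ord0, ord0)].
  apply: (max_card_matchingP accM) => M' /andP[matchM' _].
  by rewrite cards1; apply: card_matching_one_seller.
apply: le_trans (le_round_regret maxM).
by rewrite /gft big_set1 /c0 subr0 lerB ?le_gft_star_value.
Qed.

Lemma round_regret_high_price p :
  v ord0 < p -> v ord_max < p -> v ord_max <= round_regret c0 v p p.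
Proof.
move=> v0_lt_p v1_lt_p.
have rejects j : ~~ buyer_accepts v p j.
  rewrite -ltNge; case: (unliftP ord0 j) => [k ->|->] //.
  by rewrite (_ : lift ord0 k = ord_max) //; apply: val_inj; rewrite /= [k]ord1.
have accM : accepting_matching c0 v p p set0.
  by rewrite /accepting_matching is_matching_set0; apply/forall_inP => e; rewrite inE.
have maxM : max_card_matching c0 v p p set0.
  apply: (max_card_matchingP accM) => M' /andP[_ /forall_inP accM'].
  rewrite cards0 leqn0 cards_eq0; apply/eqP/setP => e; rewrite inE.
  by apply/negbTE/negP => /accM'/andP[_]; apply/negP.
apply: le_trans (le_round_regret maxM).
by rewrite /gft big_set0 subr0 le_gft_star_value.
Qed.

End OneSellerTwoBuyers.

Section Potential.
Variable R : realType.

Lemma pot_low_step (w w' X : R) : 0 < w -> w <= 1/4 -> w - w ^+ 3 <= w' ->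
  1 <= w ^+ 2 * X -> 1 <= w' ^+ 2 * (X + 3).
Proof.
move=> w_gt0 w_le w'_ge hX.
have a_gt0 : 0 < w ^+ 2 by rewrite exprn_gt0.
have a_le : w ^+ 2 <= 1/16 by rewrite expr2; nra.
have X_ge0 : 0 <= X by rewrite -(pmulr_rge0 _ a_gt0); lra.
have w3_le : w ^+ 3 <= w ^+ 2 * w by rewrite exprSr.
have shrink : (w - w ^+ 3) ^+ 2 <= w' ^+ 2 by rewrite ler_pXn2r // nnegrE; nra.
have sq_factor : (w - w ^+ 3) ^+ 2 = w ^+ 2 * (1 - w ^+ 2) ^+ 2 by ring.
rewrite {}sq_factor in shrink.
set a := w ^+ 2 in a_gt0 a_le hX shrink *.
apply: le_trans (ler_wpM2r _ shrink); last lra.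
have : 1 <= (1 - a) ^+ 2 * (1 + 3 * a) by rewrite expr2; nra.
have : (1 - a) ^+ 2 * 1 <= (1 - a) ^+ 2 * (a * X) by rewrite ler_wpM2l ?sqr_ge0.
have -> : a * (1 - a) ^+ 2 * (X + 3) = (1 - a) ^+ 2 * (a * X) + (1 - a) ^+ 2 * (3 * a) by ring.
rewrite mulrDr mulr1; lra.
Qed.

Lemma pot_high_step (w w' c Y : R) : 0 < w -> w ^+ 3 <= w' ->
  1 <= w ^+ 2 * c -> 0 <= Y -> 1 <= w' ^+ 2 * (c ^+ 3 + Y).
Proof.
move=> w_gt0 w'_ge hc Y_ge0.
have c_ge0 : 0 <= c by rewrite -(pmulr_rge0 _ (exprn_gt0 2 w_gt0)); lra.
have w3_ge0 : 0 <= w ^+ 3 by rewrite exprn_ge0 ?ltW.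
have shrink : (w ^+ 3) ^+ 2 * c ^+ 3 <= w' ^+ 2 * c ^+ 3.
  by rewrite ler_wpM2r ?exprn_ge0 // ler_pXn2r // nnegrE; lra.
have : 1 <= (w ^+ 2 * c) ^+ 3 by rewrite exprn_ege1.
have -> : (w ^+ 2 * c) ^+ 3 = (w ^+ 3) ^+ 2 * c ^+ 3 by ring.
have : 0 <= w' ^+ 2 * Y by rewrite mulr_ge0 ?sqr_ge0.
rewrite mulrDr; lra.
Qed.

Variable M : R.

(* After n low and k high prices the adversary keeps 1 <= w^2 (potA k + 3 n);
   potA k.+1 = potC k ^ 3 because a high price may shrink the width w to w^3. *)
Fixpoint potA (k : nat) : R := if k is k'.+1 then (2 * potA k' + 36 * M ^+ 2) ^+ 3 else 16.
Definition potC (k : nat) : R := 2 * potA k + 36 * M ^+ 2.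

Lemma potA_ge16 k : 16 <= potA k.
Proof.
elim: k => [|k IHk] /=; first lra.
set x := 2 * potA k + 36 * M ^+ 2.
have x_ge32 : 32 <= x by have := sqr_ge0 M; rewrite /x; lra.
by have := @ler_eXnr _ x 3 isT; lra.
Qed.

Lemma potC_ge1 k : 1 <= potC k.
Proof. by have := potA_ge16 k; have := sqr_ge0 M; rewrite /potC; lra. Qed.

Lemma potC_homo j k : (j <= k)%N -> potC j <= potC k.
Proof.
move=> /subnK <-; elim: (k - j)%N => // d IHd; apply: le_trans IHd _.
rewrite addSn {2}/potC /= -/(potC _).
have := @ler_eXnr _ _ 3 isT (potC_ge1 (d + j)); have := potA_ge16 (d + j).
by have := sqr_ge0 M; rewrite /potC; lra.
Qed.

Lemma potC_le_pow (B : R) k : 3 * potC 0 <= B -> 3 * potC k <= B ^+ (3 ^ k).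
Proof.
move=> hB; elim: k => [|k IHk]; first by rewrite expr1.
have C_ge1 := potC_ge1 k.
have cubeC : (3 * potC k) ^+ 3 <= (B ^+ (3 ^ k)) ^+ 3.
  by rewrite ler_pXn2r // nnegrE; lra.
rewrite expnSr exprM; apply: le_trans cubeC.
have -> : potC k.+1 = 2 * potC k ^+ 3 + 36 * M ^+ 2 by [].
have : 36 * M ^+ 2 <= potC k by have := potA_ge16 k; rewrite /potC; lra.
have := @ler_eXnr _ _ 3 isT C_ge1.
have -> : (3 * potC k) ^+ 3 = 27 * potC k ^+ 3 by ring.
lra.
Qed.

Lemma sqr_mul_potC_ge1 (w : R) n k : 0 < w -> n%:R * w < M ->
  1 <= w ^+ 2 * (potA k + 3 * n%:R) -> 1 <= w ^+ 2 * potC k.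
Proof.
move=> w_gt0 nw_lt hpot.
have wA_ge0 : 0 <= w ^+ 2 * potA k.
  by rewrite mulr_ge0 ?sqr_ge0 //; have := potA_ge16 k; lra.
have wM_ge0 : 0 <= w ^+ 2 * M ^+ 2 by rewrite mulr_ge0 ?sqr_ge0.
have -> : w ^+ 2 * potC k = 2 * (w ^+ 2 * potA k) + 36 * (w ^+ 2 * M ^+ 2).
  by rewrite /potC; ring.
have [|wA_small] := lerP 1 (2 * (w ^+ 2 * potA k)); first lra.
have nw2_lt : 3 * n%:R * w ^+ 2 <= 3 * M * w.
  by have := ler_wpM2r (ltW w_gt0) (ltW nw_lt); rewrite expr2; nra.
have Mw_ge : 1 <= 6 * M * w.
  by move: hpot; rewrite mulrDr; nra.
have : 1 <= (6 * M * w) ^+ 2 by rewrite exprn_ege1.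
have -> : (6 * M * w) ^+ 2 = 36 * (w ^+ 2 * M ^+ 2) by ring.
lra.
Qed.

End Potential.

Section Adversary.
Variables (R : realType) (alg : seq (feedback 1 2) -> R).

Record state := State {
  lo : R; hi : R; n_low : nat; n_high : nat; past : seq (feedback 1 2) }.

Definition answer (b : bool) : feedback 1 2 := ([ffun _ => true], [ffun _ => b]).

Definition offer (s : state) : R := alg (past s).

Definition low_price (s : state) : bool := offer s <= lo s + (hi s - lo s) ^+ 3.

Definition adv_step (s : state) : state :=
  if low_price s then
    State (Num.max (lo s) (offer s)) (hi s) (n_low s).+1 (n_high s) (rcons (past s) (answer true))
  else
    State (lo s) (Num.min (hi s) (offer s)) (n_low s) (n_high s).+1 (rcons (past s) (answer false)).

Definition adv (t : nat) : state := iter t adv_step (State (1/4) (1/2) 0 0 [::]).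

Definition width (t : nat) : R := hi (adv t) - lo (adv t).

Lemma advS t : adv t.+1 = adv_step (adv t).
Proof. by []. Qed.

Lemma past_advS t : past (adv t.+1) = rcons (past (adv t)) (answer (low_price (adv t))).
Proof. by rewrite advS /adv_step; case: ifP. Qed.

Lemma adv_bounds t : 1/4 <= lo (adv t) /\ lo (adv t) < hi (adv t) /\ hi (adv t) <= 1/2.
Proof.
elim: t => [|t [lo_ge [lo_lt_hi hi_le]]]; first by rewrite /=; lra.
rewrite advS /adv_step /low_price.
set w := hi (adv t) - lo (adv t); have w_def : w = hi (adv t) - lo (adv t) by [].
have w_gt0 : 0 < w by lra.
have w_le : w <= 1/4 by lra.
have w3_lt : w ^+ 3 < w by rewrite exprS expr2; nra.
have w3_ge0 : 0 <= w ^+ 3 by rewrite exprn_ge0 ?ltW.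
case: ifP => /= [p_low | /negbT]; last rewrite -ltNge => p_high.
- by rewrite le_max lo_ge gt_max lo_lt_hi /=; split => //; split => //; lra.
- by rewrite lt_min lo_lt_hi ge_min hi_le /=; split => //; split => //; lra.
Qed.

Lemma width_gt0 t : 0 < width t.
Proof. by have := adv_bounds t; rewrite /width; lra. Qed.

Lemma width_le t : width t <= 1/4.
Proof. by have := adv_bounds t; rewrite /width; lra. Qed.

Lemma n_low_add_n_high t : (n_low (adv t) + n_high (adv t))%N = t.
Proof.
elim: t => // t IHt; rewrite advS /adv_step.
by case: ifP => _ /=; rewrite ?addSn ?addnS IHt.
Qed.

Lemma lo_adv_homo s t : (s <= t)%N -> lo (adv s) <= lo (adv t).
Proof.
move=> /subnK <-; elim: (t - s)%N => // d IHd; apply: le_trans IHd _.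
by rewrite addSn advS /adv_step; case: ifP => _ //=; rewrite le_max lexx.
Qed.

Lemma hi_adv_homo s t : (s <= t)%N -> hi (adv t) <= hi (adv s).
Proof.
move=> /subnK <-; elim: (t - s)%N => // d IHd; apply: le_trans _ IHd.
by rewrite addSn advS /adv_step; case: ifP => _ //=; rewrite ge_min lexx.
Qed.

Lemma low_offer_le_lo s t : (s < t)%N -> low_price (adv s) -> offer (adv s) <= lo (adv t).
Proof.
move=> s_lt p_low; apply: le_trans (lo_adv_homo s_lt).
by rewrite advS /adv_step p_low /= le_max lexx orbT.
Qed.

Lemma hi_le_high_offer s t : (s < t)%N -> ~~ low_price (adv s) -> hi (adv t) <= offer (adv s).
Proof.
move=> s_lt p_high; apply: le_trans (hi_adv_homo s_lt) _.
by rewrite advS /adv_step (negbTE p_high) /= ge_min lexx orbT.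
Qed.

Lemma adv_low_step t : low_price (adv t) ->
  [/\ width t - width t ^+ 3 <= width t.+1,
      n_low (adv t.+1) = (n_low (adv t)).+1 & n_high (adv t.+1) = n_high (adv t)].
Proof.
move=> p_low; have w_gt0 := width_gt0 t.
rewrite /width advS /adv_step p_low /=; split => //.
have : Num.max (lo (adv t)) (offer (adv t)) <= lo (adv t) + width t ^+ 3.
  by rewrite ge_max lerDl exprn_ge0 ?(ltW w_gt0) //; exact: p_low.
by rewrite /width; lra.
Qed.

Lemma adv_high_step t : ~~ low_price (adv t) ->
  [/\ width t ^+ 3 <= width t.+1,
      n_low (adv t.+1) = n_low (adv t) & n_high (adv t.+1) = (n_high (adv t)).+1].
Proof.
move=> p_high; have w_gt0 := width_gt0 t; have w_le := width_le t.
have w3_le : width t ^+ 3 <= width t by rewrite exprS expr2; nra.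
rewrite /width advS /adv_step (negbTE p_high) /=; split => //.
move: p_high; rewrite /low_price -ltNge => p_high.
have : lo (adv t) + width t ^+ 3 <= Num.min (hi (adv t)) (offer (adv t)).
  by rewrite le_min (ltW p_high) andbT; move: w3_le; rewrite /width; lra.
by rewrite /width; lra.
Qed.

Variable M : R.

Lemma adv_potential t :
  (forall s, (s < t)%N -> (n_low (adv s))%:R * width s < M) ->
  1 <= width t ^+ 2 * (potA M (n_high (adv t)) + 3 * (n_low (adv t))%:R).
Proof.
elim: t => [_ | t IHt running]; first by rewrite /width /=; lra.
have pot_t := IHt (fun s s_lt => running s (ltnW s_lt)).
have w_gt0 := width_gt0 t.
have [p_low | p_high] := boolP (low_price (adv t)).
  have [w_ge -> ->] := adv_low_step p_low.
  rewrite -[(n_low _).+1%:R]natr1 [3 * (_ + 1)]mulrDr mulr1 addrA.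
  exact: pot_low_step w_gt0 (width_le t) w_ge pot_t.
have [w_ge -> ->] := adv_high_step p_high.
have potC_t := sqr_mul_potC_ge1 w_gt0 (running t (ltnSn t)) pot_t.
by apply: pot_high_step w_gt0 w_ge potC_t _; rewrite mulr_ge0.
Qed.

Lemma adv_stops T K : K%:R + M * potC M K <= T%:R ->
  exists2 t, (t <= T)%N & (K <= n_high (adv t))%N \/ M <= (n_low (adv t))%:R * width t.
Proof.
move=> budget.
have [/existsP[t /orP stop] | /existsPn running] := boolP [exists t : 'I_T.+1,
    (K <= n_high (adv t))%N || (M <= (n_low (adv t))%:R * width t)].
  by exists t; first rewrite -ltnS.
have {}running t : (t <= T)%N -> (n_high (adv t) < K)%N /\ (n_low (adv t))%:R * width t < M.
  by move=> t_le; have := running (Ordinal (t_le : (t < T.+1)%N)); rewrite negb_or -ltnNge -ltNge => /andP.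
have pot := adv_potential (fun s s_lt => (running s (ltnW s_lt)).2).
have [k_lt nw_lt] := running T (leqnn T).
have wC_ge1 := sqr_mul_potC_ge1 (width_gt0 T) nw_lt pot.
have C_le := potC_homo M (ltnW k_lt).
have C_ge1 := potC_ge1 M (n_high (adv T)).
have w_gt0 := width_gt0 T; have w_le := width_le T.
have k_le : (n_high (adv T))%:R + 1 <= K%:R :> R by rewrite natr1 ler_nat.
have T_eq : T%:R = (n_low (adv T))%:R + (n_high (adv T))%:R :> R by rewrite -natrD n_low_add_n_high.
set n := (n_low (adv T))%:R in nw_lt pot T_eq; have n_ge0 : 0 <= n by [].
set w := width T in wC_ge1 nw_lt w_gt0 w_le.
set C := potC M (n_high (adv T)) in wC_ge1 C_le C_ge1.
(* n <= (n w) (w C) <= M C, hence T = n + k < M potC K + K. *)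
have : n <= M * C.
  have : n * (w ^+ 2 * C) <= M * (w * C).
    have -> : n * (w ^+ 2 * C) = (n * w) * (w * C) by ring.
    by rewrite ler_pM2r ?ltW //; nra.
  nra.
nra.
Qed.

End Adversary.

Section AdversaryRegret.
Variables (R : realType) (alg : seq (feedback 1 2) -> R) (t : nat).
Hypothesis alg_range : forall h, 0 <= alg h <= 1.
Let c0 : 'I_1 -> R := fun _ => 0.

Definition adv_values : 'I_2 -> R := fun j =>
  if j == ord0 then lo (adv alg t) else (lo (adv alg t) + hi (adv alg t)) / 2.

Lemma adv_values_bounds j : lo (adv alg t) <= adv_values j < hi (adv alg t).
Proof.
by have [_ [lo_lt_hi _]] := adv_bounds alg t; rewrite /adv_values; case: ifP => _; lra.
Qed.

Lemma adv_values_range j : 0 <= adv_values j <= 1.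
Proof.
have := adv_values_bounds j; have [lo_ge [_ hi_le]] := adv_bounds alg t.
by case/andP => ? ?; apply/andP; split; lra.
Qed.

Lemma observe_adv s : (s < t)%N ->
  observe c0 adv_values (offer alg (adv alg s)) (offer alg (adv alg s))
  = answer (low_price alg (adv alg s)).
Proof.
move=> s_lt; rewrite /observe /answer; congr pair; apply/ffunP => j; rewrite !ffunE.
  by rewrite /seller_accepts /c0; case/andP: (alg_range (past (adv alg s))).
have /andP[lo_le_v v_lt_hi] := adv_values_bounds j.
rewrite /buyer_accepts; have [p_low | p_high] := boolP (low_price alg (adv alg s)).
  exact: le_trans (low_offer_le_lo s_lt p_low) lo_le_v.
by apply/negbTE; rewrite -ltNge (lt_le_trans v_lt_hi) ?hi_le_high_offer.
Qed.

Lemma history_adv s : (s <= t)%N -> history c0 adv_values alg s = past (adv alg s).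
Proof.
elim: s => // s IHs s_lt.
by rewrite /= IHs ?(ltnW s_lt) // past_advS -observe_adv.
Qed.

Lemma cum_regret_adv s : (s <= t)%N ->
  (n_low (adv alg s))%:R * (adv_values ord_max - adv_values ord0)
    + (n_high (adv alg s))%:R * adv_values ord_max
  <= cum_regret c0 adv_values alg s.
Proof.
elim: s => [_ | s IHs s_lt]; first by rewrite /cum_regret big_ord0 !mul0r addr0.
have := IHs (ltnW s_lt); rewrite /cum_regret big_ord_recr /= /price history_adv ?(ltnW s_lt) //.
have /andP[p_ge0 _] := alg_range (past (adv alg s)).
have /andP[lo_le_v0 v0_lt_hi] := adv_values_bounds ord0.
have /andP[_ v1_lt_hi] := adv_values_bounds ord_max.
have [p_low | p_high] := boolP (low_price alg (adv alg s)).
  have [_ -> ->] := adv_low_step p_low.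
  have := round_regret_low_price p_ge0 (le_trans (low_offer_le_lo s_lt p_low) lo_le_v0).
  by rewrite -natr1; lra.
have [_ -> ->] := adv_high_step p_high.
have hi_le := hi_le_high_offer s_lt p_high.
have := round_regret_high_price (lt_le_trans v0_lt_hi hi_le) (lt_le_trans v1_lt_hi hi_le).
by rewrite -natr1; lra.
Qed.

End AdversaryRegret.

Lemma cum_regret_ge_budget (R : realType) (alg : seq (feedback 1 2) -> R) (T K : nat) :
  (forall h, 0 <= alg h <= 1) ->
  K%:R + (K%:R / 2) * potC (K%:R / 2) K <= T%:R :> R ->
  exists v : 'I_2 -> R, (forall j, 0 <= v j <= 1) /\
    K%:R / 4 <= cum_regret (fun _ : 'I_1 => 0) v alg T.
Proof.
move=> alg_range budget.
have [t t_le stop] := adv_stops alg budget.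
exists (adv_values alg t); split; first exact: adv_values_range.
apply: le_trans (cum_regret_homo _ _ _ t_le).
apply: le_trans (cum_regret_adv alg_range (leqnn t)).
have [lo_ge [lo_lt_hi _]] := adv_bounds alg t.
have gap : adv_values alg t ord_max - adv_values alg t ord0 = width alg t / 2.
  by rewrite /adv_values /width /=; field.
have v1_ge : 1/4 <= adv_values alg t ord_max by rewrite /adv_values /=; lra.
rewrite gap; set n := (n_low _)%:R; set k := (n_high _)%:R.
have n_ge0 : 0 <= n by []; have k_ge0 : 0 <= k by [].
have w_gt0 := width_gt0 alg t.
case: stop => [K_le | nw_ge]; last by nra.
have K_le_k : K%:R <= k :> R by rewrite ler_nat.
nra.
Qed.

Lemma quadratic_le_exp4 K : (96 + 27 * K ^ 2 <= 4 ^ (K + 5))%N.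
Proof.
have K_lt : (K < 2 ^ K)%N by apply: ltn_expl.
have -> : (4 ^ (K + 5) = 1024 * (2 ^ K * 2 ^ K))%N by rewrite expnD -expnMn mulnC.
nia.
Qed.

Lemma linear_exp3_le_exp9 K : (K + (K + 5) * 3 ^ K <= 9 ^ (K + 2))%N.
Proof.
have K_lt : (K < 3 ^ K)%N by apply: ltn_expl.
have -> : (9 ^ (K + 2) = 81 * (3 ^ K * 3 ^ K))%N by rewrite expnD -expnMn mulnC.
nia.
Qed.

Section Budget.
Variables (R : realType) (K : nat).
Let M : R := K%:R / 2.

Lemma potC0_le_exp4 : 3 * potC M 0 <= (4 ^ (K + 5))%:R.
Proof.
have := quadratic_le_exp4 K; rewrite -(ler_nat R) natrD natrM natrX => /(le_trans _); apply.
rewrite /potC /= (_ : M ^+ 2 = K%:R ^+ 2 / 4); first lra.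
by rewrite /M; field.
Qed.

Lemma budget_le_exp4_exp9 : K%:R + M * potC M K <= (4 ^ (9 ^ (K + 2)))%:R.
Proof.
have C_le := potC_le_pow K potC0_le_exp4.
set C := potC M K in C_le *; have C_ge1 : 1 <= C := potC_ge1 M K.
have K_le : K%:R <= (4 ^ K)%:R :> R by rewrite ler_nat ltnW // ltn_expl.
have KC_ge : K%:R <= K%:R * C by rewrite ler_peMr.
have K_ge0 : 0 <= K%:R :> R by [].
apply: le_trans (_ : (4 ^ K)%:R * (4 ^ (K + 5))%:R ^+ (3 ^ K) <= _).
  apply: le_trans (_ : K%:R * (3 * C) <= _); first by rewrite /M; lra.
  by apply: ler_pM => //; lra.
rewrite -natrX -natrM ler_nat -expnM -expnD leq_pexp2l //.
exact: linear_exp3_le_exp9.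
Qed.

End Budget.

Section Logs.
Variable R : realType.

Lemma expR1_le4 : expR 1 <= 4 :> R.
Proof.
have half_le : 1/2 <= expR (- (1/2)) :> R by have := expR_ge1Dx (- (1/2) : R); lra.
have exp_half_le : expR (1/2) <= 2 :> R.
  have := expR_gt0 (1/2 : R).
  have : expR (1/2) * expR (- (1/2)) = 1 :> R by rewrite -expRD subrr expR0.
  nra.
have -> : 1 = 1/2 + 1/2 :> R by field.
by rewrite expRD; have := expR_gt0 (1/2 : R); nra.
Qed.

Lemma ln4_ge1 : 1 <= ln 4 :> R.
Proof. by rewrite -[leLHS](expRK 1) ler_ln ?expR1_le4 ?posrE ?expR_gt0. Qed.

Lemma ln_ge_of_exp4 (x : R) m : 4 ^+ m <= x -> m%:R <= ln x.
Proof.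
move=> x_ge; have pow_gt0 : 0 < 4 ^+ m :> R by rewrite exprn_gt0.
apply: le_trans (_ : ln (4 ^+ m) <= _); last by rewrite ler_ln // posrE (lt_le_trans _ x_ge).
by rewrite lnXn // -mulr_natr; have := ln4_ge1; have : 0 <= m%:R :> R by []; nra.
Qed.

Lemma ln_lt_of_lt_exp (b x : R) N : 0 < b -> 0 < x -> x < b ^+ N -> ln x < N%:R * b.
Proof.
move=> b_gt0 x_gt0 x_lt; have pow_gt0 : 0 < b ^+ N by rewrite exprn_gt0.
apply: lt_le_trans (_ : ln (b ^+ N) <= _); first by rewrite ltr_ln.
by rewrite lnXn // -[ln _ *+ N]mulr_natl ler_wpM2l // ltW // ln_sublinear.
Qed.

Lemma ln_iter_ge T N : (4 ^ (4 ^ 4) <= N)%N -> (4 ^ N <= T)%N ->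
  [/\ (4 <= T)%N, 256 <= ln (ln (T%:R : R)) & 1 <= ln (ln (ln (ln (T%:R : R))))].
Proof.
move=> N_ge T_ge; have N_gt0 : (0 < N)%N by apply: leq_trans N_ge; rewrite expn_gt0.
have /ln_ge_of_exp4 lnT_ge : 4 ^+ N <= T%:R :> R by rewrite -natrX ler_nat.
have /ln_ge_of_exp4 lnlnT_ge : 4 ^+ (4 ^ 4) <= ln (T%:R : R).
  by apply: le_trans lnT_ge; rewrite -natrX ler_nat.
have /ln_ge_of_exp4 : 4 ^+ 1 <= ln (ln (ln (T%:R : R))).
  by rewrite expr1; apply: ln_ge_of_exp4; rewrite -natrX.
split => //; apply: leq_trans T_ge.
by rewrite -[X in (X <= _)%N]expn1 leq_pexp2l.
Qed.

End Logs.

Definition level (T : nat) : nat := trunc_log 9 (trunc_log 4 T).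

Lemma exp4_exp9_level_le T : (4 <= T)%N -> (4 ^ (9 ^ level T) <= T)%N.
Proof.
move=> T_ge4; have log_gt0 : (0 < trunc_log 4 T)%N by apply: trunc_log_max.
have T_gt0 : (0 < T)%N by apply: leq_trans T_ge4.
apply: leq_trans (trunc_logP (isT : (1 < 4)%N) T_gt0).
by rewrite leq_pexp2l //; apply: trunc_logP.
Qed.

Lemma ln_ln_lt_level (R : realType) T : (1 < T)%N ->
  ln (ln T%:R) < 9 * (level T + 2)%:R :> R.
Proof.
move=> T_gt1.
have T_lt : (T < 4 ^ (9 ^ (level T).+1))%N.
  apply: leq_trans (@trunc_log_ltn 4 T isT) _.
  by rewrite leq_pexp2l //; apply: trunc_log_ltn.
have lnT_lt : ln T%:R < 9 ^+ (level T + 2) :> R.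
  have T_lt' : T%:R < 4 ^+ (9 ^ (level T).+1) :> R by rewrite -natrX ltr_nat.
  apply: lt_le_trans (ln_lt_of_lt_exp _ _ T_lt') _; rewrite ?ltr0n ?(ltnW T_gt1) //.
  have : 0 <= 9 ^+ level T :> R by rewrite exprn_ge0.
  by rewrite natrX addn2 !exprS; lra.
rewrite mulrC; apply: ln_lt_of_lt_exp lnT_lt => //.
by apply: ln_gt0; rewrite ltr1n.
Qed.

Theorem theorem4p1 (R : realType) :
  exists kappa : R, 0 < kappa /\
  exists T0 : nat, forall T : nat, (T0 <= T)%N ->
  forall alg : seq (feedback 1 2) -> R,
    (forall h, 0 <= alg h <= 1) ->
    exists v : 'I_2 -> R, (forall j, 0 <= v j <= 1) /\
      kappa * (ln (ln T%:R) / ln (ln (ln (ln T%:R))))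
        <= cum_regret (fun _ : 'I_1 => 0) v alg T.
Proof.
exists (1/72); split; first lra.
exists (4 ^ (4 ^ (4 ^ 4)))%N => T /(ln_iter_ge R (leqnn _))[T_ge4 lnlnT_ge lnlnlnlnT_ge1].
move=> alg alg_range.
have := ln_ln_lt_level R (leq_trans (isT : (1 < 4)%N) T_ge4); rewrite natrD => lnlnT_lt.
have level_ge2 : (2 <= level T)%N by rewrite -(ler_nat R); lra.
have budget := budget_le_exp4_exp9 R (level T - 2); rewrite subnK // in budget.
have T_ge : (4 ^ (9 ^ level T))%:R <= T%:R :> R by rewrite ler_nat exp4_exp9_level_le.
have [v [v_range regret_ge]] := cum_regret_ge_budget alg_range (le_trans budget T_ge).
exists v; split => //; apply: le_trans regret_ge.
have : ln (ln (T%:R : R)) / ln (ln (ln (ln T%:R))) <= ln (ln T%:R).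
  by rewrite ler_pdivrMr; nra.
by rewrite natrB //; lra.
Qed.
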